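(* Let $n\ge3$ and let $q_1,\dots,q_n\ge2$ be integers such that $\prod_{k=1}^n\big(1+\frac{1}{q_k}\big)\ge n\log n$ (natural logarithm). Then $Q=[q_1]\times\cdots\times[q_n]$ can be covered by hyperplanes, each with a non-empty set of fixed coordinates, no two of which are parallel.
   Context: $[m]=\{1,\dots,m\}$. A hyperplane in $Q=S_1\times\cdots\times S_n$ is $A=A_1\times\cdots\times A_n$ with each $A_k$ either $S_k$ or a singleton in $S_k$; $F(A)=\{k:A_k\text{ is a singleton}\}$ is its set of fixed coordinates; two hyperplanes are parallel if they have the same set of fixed coordinates. *)

From Stdlib Require Import Reals.
From HB Require Import structures.
From mathcomp Require Import all_boot all_order all_algebra.
From mathcomp Require Import Rstruct.
Set Implicit Arguments. Unset Strict Implicit. Unset Printing Implicit Defensive.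

(* Coordinates are indexed by 'I_n; the k-th factor [q_k] is encoded as
   {0, ..., q k - 1} (a relabelling of {1,...,q_k}). *)

Definition in_box (n : nat) (q : 'I_n -> nat) (x : 'I_n -> nat) : Prop :=
  forall k, x k < q k.

(* A hyperplane is encoded by its set F of fixed coordinates together with
   the fixed values (values outside F are irrelevant). *)
Definition hyperplane (n : nat) := ({set 'I_n} * {ffun 'I_n -> nat})%type.

Definition fixed_coords (n : nat) (A : hyperplane n) : {set 'I_n} := A.1.

Definition is_hyperplane (n : nat) (q : 'I_n -> nat) (A : hyperplane n) : Prop :=
  forall k, k \in A.1 -> A.2 k < q k.

Definition in_hyperplane (n : nat) (A : hyperplane n) (x : 'I_n -> nat) : Prop :=
  forall k, k \in A.1 -> x k = A.2 k.

Definition parallel (n : nat) (A B : hyperplane n) : Prop :=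
  fixed_coords A = fixed_coords B.

From Stdlib Require Import Reals.
From HB Require Import structures.
From mathcomp Require Import all_boot all_order all_algebra.
From mathcomp Require Import Rstruct ring lra zify.
Set Implicit Arguments. Unset Strict Implicit. Unset Printing Implicit Defensive.
Import Order.TTheory GRing.Theory Num.Theory.

(* Let K be the set of coordinates k with q_k <= n. It suffices to cover the
   subbox Q_K = prod_(k in K) [q_k] with one hyperplane for each nonempty set
   F of fixed coordinates contained in K. Choosing these hyperplanes greedily,
   the one with fixed set F covers at least a fraction 1 / prod_(k in F) q_k of
   the points still uncovered, so at most
     |Q_K| * prod_F (1 - 1 / prod_(k in F) q_k) <= |Q_K| * exp (1 - prod_(k in K) (1 + 1/q_k))
   points remain, and this is < 1 because ln |Q_K| < prod_(k in K) (1 + 1/q_k) - 1.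
   For n >= 4 the latter follows from the hypothesis, since x (1 + 1/x)^3 is
   increasing and the factors with k outside K are at most exp (1/(n+1)); for
   n = 3 the hypothesis forces every q_k to be 2. *)

Local Open Scope ring_scope.
Arguments exp _%_ring_scope.
Arguments ln _%_ring_scope.

Lemma exp_gt0 (x : R) : 0 < exp x.
Proof. exact/RltP/exp_pos. Qed.

Lemma exp_ge1Dx (x : R) : 1 + x <= exp x.
Proof. exact/RleP/exp_ineq1_le. Qed.

Lemma ltr_exp : {mono exp : x y / x < y}.
Proof. by move=> x y; apply/RltP/RltP; [exact: exp_lt_inv | exact: exp_increasing]. Qed.

Lemma ler_exp : {mono exp : x y / x <= y}.
Proof. by move=> x y; rewrite !leNgt ltr_exp. Qed.

Lemma expD (x y : R) : exp (x + y) = exp x * exp y.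
Proof. exact: exp_plus. Qed.

Lemma expN (x : R) : exp (- x) = (exp x)^-1.
Proof. exact: exp_Ropp. Qed.

Lemma expMn (x : R) (k : nat) : exp (x *+ k) = exp x ^+ k.
Proof. by rewrite expRX. Qed.

Lemma lnK (x : R) : 0 < x -> exp (ln x) = x.
Proof. by move=> /RltP; apply: exp_ln. Qed.

Lemma expK : cancel exp ln.
Proof. exact: ln_exp. Qed.

Lemma ln1 : ln 1 = 0.
Proof. exact: ln_1. Qed.

Lemma ler_ln (x y : R) : 0 < x -> 0 < y -> (ln x <= ln y) = (x <= y).
Proof. by move=> x0 y0; rewrite -ler_exp !lnK. Qed.

Lemma ltr_ln (x y : R) : 0 < x -> 0 < y -> (ln x < ln y) = (x < y).
Proof. by move=> x0 y0; rewrite -ltr_exp !lnK. Qed.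

Lemma lnM (x y : R) : 0 < x -> 0 < y -> ln (x * y) = ln x + ln y.
Proof. by move=> /RltP x0 /RltP y0; apply: ln_mult. Qed.

Lemma lnX (x : R) (k : nat) : 0 < x -> ln (x ^+ k) = k%:R * ln x.
Proof. by move=> /RltP x0; rewrite -RpowE ln_pow // INRE. Qed.

Lemma ln1D_le (x : R) : 0 <= x -> ln (1 + x) <= x.
Proof. by move=> x0; rewrite -ler_exp lnK ?exp_ge1Dx //; lra. Qed.

Lemma ln_prod (I : finType) (P : pred I) (F : I -> R) :
  (forall i, P i -> 0 < F i) -> ln (\prod_(i | P i) F i) = \sum_(i | P i) ln (F i).
Proof.
move=> F_gt0.
suff [] : 0 < \prod_(i | P i) F i /\ ln (\prod_(i | P i) F i) = \sum_(i | P i) ln (F i) by [].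
apply: (big_rec2 (fun p s => 0 < p /\ ln p = s)) => [|i p s Pi [p0 <-]].
  by rewrite ltr01 ln1.
by rewrite lnM ?F_gt0 ?mulr_gt0 ?F_gt0.
Qed.

Lemma prod_1B_le_exp (I : finType) (P : pred I) (t : I -> R) :
  (forall i, P i -> 0 <= t i <= 1) ->
  \prod_(i | P i) (1 - t i) <= exp (- \sum_(i | P i) t i).
Proof.
move=> t01; suff /andP[] : 0 <= \prod_(i | P i) (1 - t i) <= exp (- \sum_(i | P i) t i) by [].
apply: (big_rec2 (fun p s => 0 <= p <= exp (- s))) => [|i p s Pi /andP[p0 ps]].
  by rewrite ler01 oppr0 expR0 lexx.
have /andP[ti0 ti1] := t01 i Pi.
rewrite mulr_ge0 ?subr_ge0 //= opprD expD ler_pM ?subr_ge0 //.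
exact: exp_ge1Dx.
Qed.

Lemma exp_nat_le_pow3 (m : nat) : exp m%:R <= 3 ^+ m.
Proof.
rewrite expMn lerXn2r ?nnegrE ?(ltW (exp_gt0 _)) //.
exact/RleP/exp_le_3.
Qed.

Lemma exp1_lt3 : exp 1 < 3.
Proof.
have e6 : exp (1/6) <= 6/5.
  have h : 1 - 1/6 <= exp (- (1/6)) := exp_ge1Dx _.
  have e0 : 0 < exp (1/6) := exp_gt0 _.
  rewrite expN -(ler_pM2r e0) mulVf ?gt_eqF // in h; lra.
have -> : exp 1 = exp (1/6) ^+ 6 by rewrite -expMn; congr exp; lra.
apply: le_lt_trans (_ : (6/5) ^+ 6 < 3); last by rewrite !exprS expr0; lra.
by rewrite lerXn2r ?nnegrE ?(ltW (exp_gt0 _)) //; lra.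
Qed.

Lemma ln_mul_ln_gt (x : R) : 4 <= x -> 4/3 < ln (x * ln x).
Proof.
move=> x4.
have ln4 : 5/4 <= ln 4.
  rewrite -ler_exp lnK // -(ler_pXn2r (_ : 0 < 4)%N) ?nnegrE ?(ltW (exp_gt0 _)) //.
  rewrite -expMn (_ : 5/4 *+ 4 = 5%:R); last by lra.
  apply: le_trans (exp_nat_le_pow3 5) _; rewrite !exprS expr0; lra.
have ln5 : 4/3 < ln 5.
  rewrite -ltr_exp lnK // -(ltr_pXn2r (_ : 0 < 3)%N) ?nnegrE ?(ltW (exp_gt0 _)) //.
  rewrite -expMn (_ : 4/3 *+ 3 = 4%:R); last by lra.
  apply: le_lt_trans (exp_nat_le_pow3 4) _; rewrite !exprS expr0; lra.
have lnx : 5/4 <= ln x by apply: le_trans ln4 _; rewrite ler_ln //; lra.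
apply: lt_le_trans ln5 _; rewrite ler_ln //; nra.
Qed.

Lemma nat_mul_1Dinv_cube_le (a b : nat) : (2 <= a <= b)%N ->
  a%:R * (1 + a%:R^-1) ^+ 3 <= b%:R * (1 + b%:R^-1) ^+ 3 :> R.
Proof.
case/andP=> a2 ab.
have cross : ((a + 1) ^ 3 * b ^ 2 <= (b + 1) ^ 3 * a ^ 2)%N.
  move: ab => /subnKC <-; set d := (b - a)%N.
  have : (4 * (a + d) * a <= (a + d) ^ 2 * a ^ 2)%N by nia.
  nia.
have cube_ratio (x : nat) : (0 < x)%N ->
    x%:R * (1 + x%:R^-1) ^+ 3 = (x + 1)%:R ^+ 3 / x%:R ^+ 2 :> R.
  move=> x0; have xR0 : x%:R != 0 :> R by rewrite pnatr_eq0 -lt0n.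
  by rewrite natrD; field.
have [a0 b0] : (0 < a /\ 0 < b)%N by lia.
rewrite !cube_ratio // ler_pdivlMr ?exprn_gt0 ?ltr0n //.
rewrite mulrAC ler_pdivrMr ?exprn_gt0 ?ltr0n //.
by rewrite -!natrX -!natrM ler_nat.
Qed.

Lemma ln_1Dinv_cube_le (a b : nat) : (2 <= a <= b)%N ->
  ln a%:R + 3 * ln (1 + a%:R^-1) <= ln b%:R + 3 / b%:R :> R.
Proof.
move=> /[dup] /andP[a2 ab] /nat_mul_1Dinv_cube_le.
have [a0 b0] : 0 < a%:R :> R /\ 0 < b%:R :> R by rewrite !ltr0n; split; lia.
have inv_gt0 (x : R) : 0 < x -> 0 < 1 + x^-1 by move=> x0; rewrite ltr_wpDr ?invr_ge0 ?ltW.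
rewrite -ler_ln ?mulr_gt0 ?exprn_gt0 ?inv_gt0 //.
rewrite [ln (a%:R * _)]lnM ?exprn_gt0 ?inv_gt0 // [ln (b%:R * _)]lnM ?exprn_gt0 ?inv_gt0 //.
rewrite !lnX ?inv_gt0 // => h; apply: le_trans h _.
by rewrite lerD2l ler_wpM2l // ln1D_le // invr_ge0 ltW.
Qed.

Lemma prod_1D_powerset (T : comNzRingType) (I : finType) (K : {set I}) (t : I -> T) :
  \prod_(k in K) (1 + t k) = \sum_(F in powerset K) \prod_(k in F) t k.
Proof.
have -> : \prod_(k in K) (1 + t k) = \prod_k ((if k \in K then t k else 0) + 1).
  by rewrite big_mkcond /=; apply: eq_bigr => k _; case: ifP; rewrite ?add0r // addrC.
rewrite (@bigA_distr T 0 1 *%R +%R _ (fun k => if k \in K then t k else 0) (fun=> 1)).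
rewrite [RHS]big_mkcond; apply: eq_bigr => F _; rewrite inE.
case: ifP => [FK | /negbT /subsetPn [k kF kK]].
  rewrite [RHS]big_mkcond; apply: eq_bigr => k _.
  by case: ifP => // kF; rewrite (subsetP FK).
by rewrite (bigD1 k) //= kF (negbTE kK) mul0r.
Qed.

Lemma prod_1B_inv_powerset_le_exp (I : finType) (K : {set I}) (w : I -> R) :
  (forall k, 1 <= w k) ->
  \prod_(F in powerset K :\ set0) (1 - (\prod_(k in F) w k)^-1)
    <= exp (1 - \prod_(k in K) (1 + (w k)^-1)).
Proof.
move=> w_ge1.
have prod_ge1 (F : {set I}) : 1 <= \prod_(k in F) w k.
  by elim/big_ind: _ => [// | x y | k _]; [exact: mulr_ege1 | exact: w_ge1].
apply: le_trans (prod_1B_le_exp _) _ => [F _|].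
  by rewrite invr_ge0 (le_trans ler01) //= invf_le1 ?(lt_le_trans ltr01).
rewrite ler_exp prod_1D_powerset [X in 1 - X](bigD1 set0) ?inE ?sub0set //= big_set0.
rewrite opprD addrA subrr add0r lerN2 le_eqVlt; apply/predU1P; left.
by apply: congr_big => // [F | F _]; rewrite ?prodfV // !inE andbC.
Qed.

Definition small_coords (n : nat) (q : 'I_n -> nat) : {set 'I_n} := [set k | (q k <= n)%N].

Section SmallCoordinates.

Variables (n : nat) (q : 'I_n -> nat).
Hypothesis q_ge2 : forall k, (2 <= q k)%N.

Local Notation K := (small_coords q).

Lemma natr_q_gt0 k : 0 < (q k)%:R :> R.
Proof. by rewrite ltr0n (leq_trans _ (q_ge2 k)). Qed.

Lemma one_Dinv_q_gt0 k : 0 < 1 + (q k)%:R^-1 :> R.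
Proof. by rewrite ltr_wpDr ?invr_ge0 ?ltW ?natr_q_gt0. Qed.

Lemma ln_prod_small_le :
  ln (\prod_(k in K) (q k)%:R) + 3 * ln (\prod_(k in K) (1 + (q k)%:R^-1))
    <= #|K|%:R * (ln n%:R + 3 / n%:R).
Proof.
rewrite ln_prod => [|k _]; last exact: natr_q_gt0.
rewrite ln_prod => [|k _]; last exact: one_Dinv_q_gt0.
rewrite mulr_sumr -big_split [#|K|%:R * _]mulr_natl -sumr_const /=.
by apply: ler_sum => k; rewrite inE => qn; apply: ln_1Dinv_cube_le; rewrite q_ge2.
Qed.

Lemma prod_large_le_exp :
  \prod_(k in ~: K) (1 + (q k)%:R^-1) <= exp (#|~: K|%:R / (n%:R + 1)).
Proof.
rewrite mulrC mulr_natr expMn -prodr_const; apply: ler_prod => k.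
rewrite !inE -ltnNge => nq; rewrite ltW ?one_Dinv_q_gt0 //=.
apply: le_trans (exp_ge1Dx _) _; rewrite ler_exp lef_pV2 ?posrE ?natr_q_gt0 //.
  by rewrite natr1 ler_nat.
by rewrite ltr_wpDl.
Qed.

Lemma ln_prod_small_lt_ge4 : (4 <= n)%N ->
  n%:R * ln n%:R <= \prod_(k < n) (1 + (q k)%:R^-1) ->
  ln (\prod_(k in K) (q k)%:R) < \prod_(k in K) (1 + (q k)%:R^-1) - 1.
Proof.
move=> n4 hP.
set p := \prod_(k in K) (1 + _); set m := (#|K|%:R : R); set j := (#|~: K|%:R : R).
set N := (n%:R : R) in hP *; set L := ln N in hP *; set y := j / (N + 1).
have N4 : 4 <= N by rewrite (ler_nat R 4).
have p0 : 0 < p by apply: prodr_gt0 => k _; exact: one_Dinv_q_gt0.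
have mj : m + j = N by rewrite -natrD cardsC card_ord.
have L0 : 0 < L by rewrite -ln1 ltr_ln //; lra.
have hNL : N * L <= p * exp y.
  apply: le_trans hP _; rewrite (bigID (mem K)) /= ler_pM2l //.
  by under eq_bigl do rewrite -in_setC; exact: prod_large_le_exp.
have ln_p : ln (N * L) <= ln p + y.
  by rewrite -(expK y) -lnM ?exp_gt0 // ler_ln ?mulr_gt0 ?exp_gt0 //; lra.
have p_ge : m * L <= p.
  have : N * L * (1 - y) <= p.
    apply: le_trans (_ : N * L * exp (- y) <= p).
      by rewrite ler_wpM2l ?mulr_ge0 ?exp_ge1Dx //; lra.
    by rewrite expN ler_pdivrMr ?exp_gt0.
  have : N * y <= j by rewrite /y mulrCA ler_piMr ?ler0n // ler_pdivrMr; lra.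
  nra.
have frac : m / N + y <= 1.
  apply: le_trans (_ : m / N + j / N <= 1).
    by rewrite lerD2l ler_wpM2l ?ler0n // lef_pV2 ?posrE; lra.
  by rewrite -mulrDl mj divff // gt_eqF //; lra.
(* ln |Q_K| <= m L + 3 m / N - 3 ln p < m L + 3 (m / N + y) - 4 <= m L - 1 <= p - 1 *)
have := ln_mul_ln_gt N4; have := ln_prod_small_le; rewrite -/p -/m -/N -/L; lra.
Qed.

End SmallCoordinates.

Lemma ln_prod_small_lt_eq3 (q : 'I_3 -> nat) : (forall k, 2 <= q k)%N ->
  3 * ln 3 <= \prod_(k < 3) (1 + (q k)%:R^-1) ->
  ln (\prod_(k in small_coords q) (q k)%:R) < \prod_(k in small_coords q) (1 + (q k)%:R^-1) - 1.
Proof.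
move=> q_ge2 hP.
have e3 := exp1_lt3.
have ln3 : 1 < ln 3 by rewrite -ltr_exp lnK.
have q2 k : q k = 2%N.
  apply/eqP; rewrite eqn_leq q_ge2 andbT leqNgt; apply/negP => q3.
  suff : \prod_(i < 3) (1 + (q i)%:R^-1) <= 3 :> R by lra.
  have f_le i b : (0 < b <= q i)%N -> 1 + (q i)%:R^-1 <= 1 + b%:R^-1 :> R.
    by case/andP=> b0 bq; rewrite lerD2l lef_pV2 ?posrE ?ler_nat ?ltr0n ?(leq_trans b0 bq).
  have f_gt0 i : 0 < 1 + (q i)%:R^-1 :> R by rewrite ltr_wpDr ?invr_ge0.
  rewrite (bigD1 k) //= (_ : 3 = (1 + 3%:R^-1) * (1 + 2%:R^-1) ^+ 2); last by rewrite expr2; field.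
  apply: ler_pM; first exact: ltW.
  - by apply: prodr_ge0 => i _; exact: ltW.
  - by apply: f_le; rewrite q3.
  rewrite (eq_bigl (fun i => i \in [pred i | i != k])) //.
  rewrite [X in _ ^+ X](_ : _ = #|[pred i | i != k]|); last by rewrite cardC1 card_ord.
  rewrite -prodr_const.
  by apply: ler_prod => i _; rewrite ltW //= f_le ?q_ge2.
have smallT : small_coords q = setT by apply/setP => k; rewrite !inE q2.
have -> : \prod_(k in small_coords q) (q k)%:R = 2 ^+ 3 :> R.
  by rewrite smallT (eq_bigr (fun=> 2%:R)) ?prodr_const ?cardsT ?card_ord // => k _; rewrite q2.
have -> : \prod_(k in small_coords q) (1 + (q k)%:R^-1) = \prod_(k < 3) (1 + (q k)%:R^-1) :> R.
  by apply: eq_bigl => k; rewrite smallT inE.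
suff : ln (2 ^+ 3) + 1 < 3 * ln 3 by lra.
rewrite -ltr_exp expD mulr_natl expMn !lnK ?exprn_gt0 // !exprS expr0; lra.
Qed.

Lemma ln_prod_small_lt (n : nat) (q : 'I_n -> nat) :
  (3 <= n)%N -> (forall k, 2 <= q k)%N ->
  n%:R * ln n%:R <= \prod_(k < n) (1 + (q k)%:R^-1) ->
  ln (\prod_(k in small_coords q) (q k)%:R) < \prod_(k in small_coords q) (1 + (q k)%:R^-1) - 1.
Proof.
move=> n3 q_ge2; have [n4 | n_lt4] := leqP 4 n; first exact: ln_prod_small_lt_ge4.
have n_eq3 : n = 3%N by lia.
by subst n; apply: ln_prod_small_lt_eq3.
Qed.

Lemma small_uncovered_lt1 (n : nat) (q : 'I_n -> nat) :
  (3 <= n)%N -> (forall k, 2 <= q k)%N ->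
  n%:R * ln n%:R <= \prod_(k < n) (1 + (q k)%:R^-1) ->
  (\prod_(k in small_coords q) (q k)%:R)
    * \prod_(F in powerset (small_coords q) :\ set0) (1 - (\prod_(k in F) (q k)%:R)^-1) < 1 :> R.
Proof.
move=> n3 q_ge2 hP; set P := \prod_(k in _) (q k)%:R.
have P0 : 0 < P by apply: prodr_gt0 => k _; rewrite ltr0n (leq_trans _ (q_ge2 k)).
apply: le_lt_trans (ler_wpM2l (ltW P0) (prod_1B_inv_powerset_le_exp _ _)) _ => [k|].
  by rewrite ler1n (leq_trans _ (q_ge2 k)).
rewrite -(lnK P0) -expD -ltr_ln ?exp_gt0 // expK ln1.
by have := ln_prod_small_lt n3 q_ge2 hP; rewrite -/P; lra.
Qed.

Lemma card_fiber_max (T U : finType) (A : {set T}) (S : {set U}) (f : T -> U) (u0 : U) :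
  u0 \in S -> {in A, forall x, f x \in S} ->
  exists2 a, a \in S & (#|A| <= #|S| * #|[set x in A | f x == a]|)%N.
Proof.
move=> u0S fAS.
case: (arg_maxnP (fun a => #|[set x in A | f x == a]|) u0S) => a aS a_max.
exists a => //.
rewrite -sum1_card (partition_big f (mem S)) //= -sum_nat_const.
apply: leq_sum => b bS; apply: leq_trans (a_max b bS).
by rewrite -sum1_card; apply/eq_leq/eq_bigl => x; rewrite inE.
Qed.

Lemma card_ord_lt (m b : nat) : (m <= b)%N -> #|[pred i : 'I_b | i < m]%N| = m.
Proof.
move=> mb; have widen_inj : injective (widen_ord mb) by move=> i j /(congr1 val) /= /val_inj.
rewrite -[RHS](card_ord m) -(card_image widen_inj); apply: eq_card => i.
rewrite inE; apply/idP/imageP => [im | [j _ ->]]; last exact: (ltn_ord j).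
by exists (Ordinal im) => //; apply: val_inj.
Qed.

Lemma map_uniq_inj_in (T1 T2 : eqType) (f : T1 -> T2) (s : seq T1) :
  uniq (map f s) -> {in s &, injective f}.
Proof.
elim: s => //= x s IH /andP[fx_s /IH inj] y z; rewrite !inE.
case/orP=> [/eqP-> | ys]; case/orP=> [/eqP-> | zs] // e.
- by move: fx_s; rewrite e map_f.
- by move: fx_s; rewrite -e map_f.
- exact: inj.
Qed.

Section GreedyCover.

Variables (n M : nat) (q : 'I_n -> nat).
Hypothesis q_bounds : forall k, (0 < q k <= M.+1)%N.

(* Points are functions into 'I_M.+1; [grid F] is the box prod_(k in F) [q_k],
   padded with 0 at the coordinates outside F. *)
Local Notation point := {ffun 'I_n -> 'I_M.+1}.

Definition grid (F : {set 'I_n}) : {set point} :=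
  [set y in pfamily ord0 F (fun k => [pred i : 'I_M.+1 | i < q k]%N)].

Definition restrict (F : {set 'I_n}) (y : point) : point :=
  [ffun k => if k \in F then y k else ord0].

Definition hyperplane_at (F : {set 'I_n}) (a : point) : hyperplane n :=
  (F, [ffun k => nat_of_ord (a k)]).

Definition on_hyperplane (A : hyperplane n) (y : point) : bool :=
  [forall k in A.1, y k == A.2 k :> nat].

Definition uncovered (U : {set point}) (hs : seq (hyperplane n)) : {set point} :=
  [set y in U | ~~ has (on_hyperplane^~ y) hs].

Lemma card_grid F : #|grid F| = (\prod_(k in F) q k)%N.
Proof.
rewrite cardsE card_pfamily /image_mem foldrE big_map big_enum /=.
by apply: eq_bigr => k _; apply: card_ord_lt; case/andP: (q_bounds k).
Qed.

Lemma ffun_ord0_grid F : [ffun=> ord0] \in grid F.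
Proof.
rewrite inE; apply/pfamilyP; split; first by apply/subsetP => k; rewrite inE ffunE eqxx.
by move=> k _; rewrite ffunE inE /=; case/andP: (q_bounds k).
Qed.

Lemma restrict_grid F y : y \in grid setT -> restrict F y \in grid F.
Proof.
rewrite !inE => /pfamilyP[_ y_lt]; apply/pfamilyP; split.
  by apply/subsetP => k; rewrite inE ffunE; case: ifP; rewrite ?eqxx.
by move=> k kF; rewrite ffunE kF; apply: y_lt; rewrite inE.
Qed.

Lemma grid_subT F : grid F \subset grid setT.
Proof.
apply/subsetP => y; rewrite !inE => /pfamilyP[/subsetP y0 y_lt]; apply/pfamilyP.
split=> [|k _]; first by apply/subsetP => k; rewrite inE.
case: (boolP (k \in F)) => [/y_lt // | kF].
have /eqP -> : y k == ord0 by apply: contraNT kF => yk; apply: y0; rewrite inE.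
by rewrite inE /=; case/andP: (q_bounds k).
Qed.

Lemma on_hyperplane_at F a y : restrict F y == a -> on_hyperplane (hyperplane_at F a) y.
Proof.
move=> /eqP <-; apply/forall_inP => k kF.
by rewrite /= !ffunE kF.
Qed.

Lemma hyperplane_at_grid F a : a \in grid F -> is_hyperplane q (hyperplane_at F a).
Proof. by rewrite inE => /pfamilyP[_ a_lt] k kF; rewrite ffunE; apply: a_lt. Qed.

Lemma greedy_step F (U : {set point}) : U \subset grid setT ->
  exists2 a, a \in grid F &
    (#|U| <= (\prod_(k in F) q k) * #|[set y in U | restrict F y == a]|)%N.
Proof.
move=> UT; rewrite -card_grid.
by apply: card_fiber_max (ffun_ord0_grid F) _ => y /(subsetP UT) /restrict_grid.
Qed.

Lemma prod_natr_ge1 (F : {set 'I_n}) : 1 <= \prod_(k in F) (q k)%:R :> R.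
Proof. by rewrite -natr_prod ler1n prodn_gt0 // => k; case/andP: (q_bounds k). Qed.

Lemma greedy_cover (L : seq {set 'I_n}) (U : {set point}) : U \subset grid setT ->
  exists hs : seq (hyperplane n),
    [/\ map fst hs = L, {in hs, forall A, is_hyperplane q A} &
        #|uncovered U hs|%:R
          <= #|U|%:R * \prod_(F <- L) (1 - (\prod_(k in F) (q k)%:R)^-1) :> R].
Proof.
elim: L U => [|F L IH] U UT.
  exists [::]; split => //; rewrite big_nil mulr1 ler_nat subset_leq_card //.
  by apply/subsetP => y; rewrite inE => /andP[].
have [a aF fiber] := greedy_step F UT.
set C := [set y in U | restrict F y == a] in fiber.
have [hs [fst_hs hs_hyp hs_count]] := IH (U :\: C) (subset_trans (subsetDl U C) UT).
exists (hyperplane_at F a :: hs); split.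
- by rewrite /= fst_hs.
- by move=> A; rewrite inE => /predU1P[-> | /hs_hyp //]; exact: hyperplane_at_grid.
have uncovered_sub : uncovered U (hyperplane_at F a :: hs) \subset uncovered (U :\: C) hs.
  apply/subsetP => y; rewrite !inE /= negb_or => /andP[yU /andP[yFa ->]].
  by rewrite yU /= !andbT; apply: contraNneq yFa => <-; apply: on_hyperplane_at.
set Q := (\prod_(k in F) (q k)%:R : R).
have Q_ge1 : 1 <= Q := prod_natr_ge1 F.
have card_UC : #|U :\: C|%:R <= #|U|%:R * (1 - Q^-1) :> R.
  have CU : C \subset U by apply/subsetP => y; rewrite inE => /andP[].
  rewrite cardsD (setIidPr CU) natrB ?subset_leq_card // mulrBr mulr1 lerD2l lerN2.
  rewrite ler_pdivrMr ?(lt_le_trans ltr01) // mulrC /Q -natr_prod -natrM ler_nat.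
  exact: fiber.
rewrite big_cons mulrA.
apply: le_trans (_ : _ <= #|uncovered (U :\: C) hs|%:R) _.
  by rewrite ler_nat subset_leq_card.
apply: le_trans hs_count _; rewrite ler_wpM2r // prodr_ge0 // => G _.
by rewrite subr_ge0 invf_le1 ?prod_natr_ge1 ?(lt_le_trans ltr01 (prod_natr_ge1 G)).
Qed.

Definition grid_point (x : 'I_n -> nat) : point := [ffun k => inord (x k)].

Lemma grid_point_grid x : in_box q x -> grid_point x \in grid setT.
Proof.
move=> xQ; rewrite inE; apply/pfamilyP; split=> [|k _]; first by apply/subsetP => k; rewrite inE.
have xM : (x k <= M)%N by rewrite -ltnS (leq_trans (xQ k)); case/andP: (q_bounds k).
by rewrite ffunE inE /= inordK.
Qed.

Lemma on_hyperplane_grid_point (K : {set 'I_n}) (A : hyperplane n) x :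
  in_box q x -> A.1 \subset K ->
  on_hyperplane A (restrict K (grid_point x)) -> in_hyperplane A x.
Proof.
move=> xQ AK /forall_inP xA k kA; have := xA k kA; rewrite !ffunE (subsetP AK k kA).
have xM : (x k <= M)%N by rewrite -ltnS (leq_trans (xQ k)); case/andP: (q_bounds k).
by rewrite inordK // => /eqP.
Qed.

End GreedyCover.

Local Close Scope ring_scope.

Theorem lemma4p2 (n : nat) (q : 'I_n -> nat) :
  3 <= n ->
  (forall k, 2 <= q k) ->
  ((n%:R : R) * ln (n%:R) <= \prod_(k < n) (1 + ((q k)%:R : R)^-1))%R ->
  exists H : seq (hyperplane n),
    [/\ forall A, A \in H -> is_hyperplane q A /\ fixed_coords A != set0,
        (* no two hyperplanes of the family are parallel *)
        forall A B, A \in H -> B \in H -> A <> B -> ~ parallel A B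
      & forall x, in_box q x -> exists2 A, A \in H & in_hyperplane A x].
Proof.
move=> n_ge3 q_ge2 hP; set K := small_coords q; set M := \max_(k < n) q k.
have q_bounds k : 0 < q k <= M.+1.
  by rewrite (leq_trans _ (q_ge2 k)) //=; exact/leqW/leq_bigmax.
have [hs [fst_hs hs_hyp few_uncovered]] :=
  greedy_cover q_bounds (enum (powerset K :\ set0)) (grid_subT q_bounds K).
have all_covered : uncovered (grid M q K) hs = set0.
  apply/eqP; rewrite -cards_eq0 -leqn0 -ltnS -(ltr_nat R).
  apply: le_lt_trans few_uncovered _; rewrite card_grid //.
  have := small_uncovered_lt1 n_ge3 q_ge2 hP.
  by rewrite -natr_prod -[X in (_ * X < _)%R]big_enum.
have fixed_hs A : A \in hs -> fixed_coords A \in powerset K :\ set0.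
  by move=> A_hs; have : A.1 \in map fst hs := map_f fst A_hs; rewrite fst_hs mem_enum.
have uniq_fst : uniq (map fst hs) by rewrite fst_hs enum_uniq.
exists hs; split.
- by move=> A /[dup] /hs_hyp A_hyp /fixed_hs; rewrite !inE => /andP[].
- by move=> A B hA hB; apply: contra_not; exact: map_uniq_inj_in uniq_fst A B hA hB.
- move=> x xQ; set y := restrict K (grid_point M x).
  have : y \notin uncovered (grid M q K) hs.
    by rewrite all_covered inE.
  rewrite inE restrict_grid ?grid_point_grid //= negbK => /hasP[A hA yA].
  exists A => //; apply: on_hyperplane_grid_point yA => //.
  by have := fixed_hs A hA; rewrite !inE => /andP[].
Qed.
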